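(* Let $d\in\{2,3\}$, $\kappa>0$, $\sigma^{-1}=2\kappa$, $\rho(s)=(2/s)^{d/2}\Gamma(d/2+1)J_{d/2}(s)$ and $K(x,x')=\rho(\sigma^{-1}|x-x'|)$. Then for all $x,x'\in\mathbb{R}^d$ with $\sigma^{-1}|x-x'|/\sqrt{d+2}\ge 1/\sqrt5$, one has $|K(x,x')|\le 1-\bar\epsilon_0$ with $\bar\epsilon_0=0.07$.
   Context: $J_{d/2}$ is the Bessel function of the first kind of order $d/2$ and $\Gamma$ the Gamma function. $K$ coincides with $\int_{B(0,2\kappa)}e^{i\langle\omega,x-x'\rangle}\,d\Lambda(\omega)$ for $\Lambda$ uniform on $B(0,2\kappa)$. *)

From Stdlib Require Import Reals Arith Factorial.
From Coquelicot Require Import Coquelicot.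
Open Scope R_scope.

Definition Gamma (x : R) : R :=
  RInt_gen (fun t => Rpower t (x - 1) * exp (- t))
           (at_right 0) (Rbar_locally p_infty).

Definition BesselJ (nu s : R) : R :=
  Series (fun m : nat =>
    (-1) ^ m / (INR (Factorial.fact m) * Gamma (INR m + nu + 1))
    * Rpower (s / 2) (2 * INR m + nu)).

Definition rho (d : nat) (s : R) : R :=
  Rpower (2 / s) (INR d / 2) * Gamma (INR d / 2 + 1) * BesselJ (INR d / 2) s.

(* Euclidean norm on R^d; a point of R^d is represented by its coordinates
   x 0, ..., x (d-1) (coordinates of index >= d are ignored). *)
Definition eucl_dist (d : nat) (x x' : nat -> R) : R :=
  sqrt (sum_f_R0 (fun i => (x i - x' i) ^ 2) (d - 1)).

Definition Kern (d : nat) (kappa : R) (x x' : nat -> R) : R :=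
  rho d (2 * kappa * eucl_dist d x x').

(** Write [u = s^2] and [P_nu(u) = Gamma(nu+1) (2/s)^nu J_nu(s) = sum_m (-u/4)^m / (m! (nu+1)_m)],
    so that [K(x,x') = P_(d/2)(u)] for [s = sigma^-1 |x - x'|].  The series [P = P_nu] solves
    [4 u P'' + 4 (nu+1) P' + P = 0], hence the energy [E(u) = P(u)^2 + 4 u P'(u)^2] satisfies
    [E' = -(8 nu + 4) P'^2 <= 0] and [|P(u)| <= sqrt (E u0)] for [u >= u0].  The hypothesis
    says [u >= u0 := (d+2)/5], and at [u0] three terms of the series for [P_nu] and for
    [P_nu' = - P_(nu+1) / (4 (nu+1))], with geometric tail bounds, give [E(u0) <= 0.93^2].
    Identifying the series with the Bessel expression needs [Gamma(x+1) = x Gamma(x)] and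
    [Gamma(x) > 0] for [x >= 1], proved from the integral definition of [Gamma]. *)

From Stdlib Require Import Reals Lra Lia Psatz Factorial.
From Coquelicot Require Import Coquelicot.
Open Scope R_scope.

Lemma exp_le_compat a b : a <= b -> exp a <= exp b.
Proof. intros [H | ->]; [left; now apply exp_increasing | right; reflexivity]. Qed.

Lemma exp_neg_half_le t : 0 <= t -> exp (- t / 2) <= / (1 + t / 2).
Proof.
  intros Ht. replace (- t / 2) with (- (t / 2)) by field. rewrite exp_Ropp.
  apply Rinv_le_contravar; [lra | apply exp_ineq1_le].
Qed.

Lemma ln_le_sub_1 z : 0 < z -> ln z <= z - 1.
Proof.
  intros Hz. rewrite <- (ln_exp (z - 1)). apply ln_le; [exact Hz |].
  pose proof (exp_ineq1_le (z - 1)). lra.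
Qed.

Lemma Rpower_le_1 t y : 0 < t <= 1 -> 0 <= y -> Rpower t y <= 1.
Proof.
  intros Ht Hy. unfold Rpower. rewrite <- exp_0. apply exp_le_compat.
  assert (ln t <= 0) by (rewrite <- ln_1; apply ln_le; lra). nra.
Qed.

Lemma Rpower_le_exp_half t y : 0 < t -> 0 < y ->
  Rpower t y <= Rpower (2 * y) y * exp (t / 2).
Proof.
  intros Ht Hy. unfold Rpower. rewrite <- exp_plus. apply exp_le_compat.
  assert (Hz : 0 < t / (2 * y)) by (apply Rdiv_lt_0_compat; lra).
  assert (Hln : ln t = ln (2 * y) + ln (t / (2 * y))).
  { rewrite <- ln_mult by lra. f_equal. field. lra. }
  pose proof (ln_le_sub_1 _ Hz).
  assert (y * ln (t / (2 * y)) <= y * (t / (2 * y))) by (apply Rmult_le_compat_l; lra).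
  replace (y * (t / (2 * y))) with (t / 2) in * by (field; lra).
  rewrite Hln. lra.
Qed.

Lemma Rpower_half_twice s m : 0 < s ->
  Rpower (s / 2) (2 * INR m) = (s ^ 2) ^ m / 4 ^ m.
Proof.
  intros Hs. replace (2 * INR m) with (INR (2 * m)) by (rewrite mult_INR; simpl; ring).
  rewrite Rpower_pow, pow_mult by lra.
  replace ((s / 2) ^ 2) with (s ^ 2 * / 4) by field.
  rewrite Rpow_mult_distr, pow_inv. reflexivity.
Qed.

Lemma Rpower_mul_exp_le t y : 0 < t -> 0 <= y ->
  Rpower t y * exp (- t) <= (1 + Rpower (2 * (y + 1)) (y + 1)) * exp (- t / 2).
Proof.
  intros Ht Hy.
  set (C := Rpower (2 * (y + 1)) (y + 1)).
  assert (HC : 0 < C) by apply exp_pos.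
  assert (Hpow : Rpower t y <= (1 + C) * exp (t / 2)).
  { assert (1 <= exp (t / 2)) by (rewrite <- exp_0; apply exp_le_compat; lra).
    destruct (Rle_dec t 1) as [Ht1 | Ht1].
    - pose proof (Rpower_le_1 t y (conj Ht Ht1) Hy). nra.
    - assert (Rpower t y <= Rpower t (y + 1)) by (apply Rle_Rpower; lra).
      assert (Rpower t (y + 1) <= C * exp (t / 2))
        by (apply Rpower_le_exp_half; lra).
      nra. }
  replace (exp (- t / 2)) with (exp (t / 2) * exp (- t))
    by (rewrite <- exp_plus; f_equal; field).
  pose proof (exp_pos (- t)). nra.
Qed.

Lemma is_lim_exp_neg_half : is_lim (fun t => exp (- t / 2)) p_infty 0.
Proof.
  apply filterlim_locally. intros [eps Heps]. exists (2 / eps). intros t Ht.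
  assert (H2 : 0 < 2 / eps) by (apply Rdiv_lt_0_compat; lra).
  change (Rabs (exp (- t / 2) - 0) < eps).
  rewrite Rminus_0_r, Rabs_pos_eq by (left; apply exp_pos).
  eapply Rle_lt_trans; [apply exp_neg_half_le; lra |].
  apply (Rmult_lt_reg_l (1 + t / 2)); [lra |]. rewrite Rinv_r by lra.
  apply (Rmult_lt_compat_r eps) in Ht; [| lra].
  replace (2 / eps * eps) with 2 in Ht by (field; lra). nra.
Qed.

Lemma sqr_le_of_abs_sub_le x c e : Rabs (x - c) <= e -> 0 <= c - e -> x ^ 2 <= (c + e) ^ 2.
Proof. intros H Hce. apply Rabs_le_between' in H. nra. Qed.

Lemma sqr_ge_of_div_sqrt_ge s D : 0 < D -> s / sqrt D >= 1 / sqrt 5 ->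
  0 < s /\ D / 5 <= s ^ 2.
Proof.
  intros HD H.
  assert (HsD : 0 < sqrt D) by (apply sqrt_lt_R0; lra).
  assert (Hs5 : 0 < sqrt 5) by (apply sqrt_lt_R0; lra).
  assert (Hlow : sqrt (D / 5) <= s).
  { rewrite sqrt_div_alt by lra.
    apply Rge_le in H. apply (Rmult_le_compat_r (sqrt D)) in H; [| lra].
    replace (s / sqrt D * sqrt D) with s in H by (field; lra).
    replace (sqrt D / sqrt 5) with (1 / sqrt 5 * sqrt D) by (field; lra). exact H. }
  assert (Hpos : 0 < sqrt (D / 5)) by (apply sqrt_lt_R0; lra).
  split; [lra |].
  rewrite <- (sqrt_sqrt (D / 5)) by lra. simpl. nra.
Qed.

Lemma Series_sub_sum_le (b : nat -> R) K q : 0 <= q < 1 -> ex_series b ->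
  (forall n, (K < n)%nat -> Rabs (b (S n)) <= q * Rabs (b n)) ->
  Rabs (Series b - sum_f_R0 b K) <= Rabs (b (S K)) / (1 - q).
Proof.
  intros Hq Hb Hratio.
  rewrite (Series_incr_n b (S K)) by (auto; lia). simpl pred.
  replace (sum_f_R0 b K + Series (fun k => b (S K + k)%nat) - sum_f_R0 b K)
    with (Series (fun k => b (S K + k)%nat)) by ring.
  set (C := Rabs (b (S K))).
  assert (Hgeom : forall k, Rabs (b (S K + k)%nat) <= C * q ^ k).
  { induction k as [| k IH].
    - rewrite Nat.add_0_r. simpl. unfold C; lra.
    - replace (S K + S k)%nat with (S (S K + k)) by lia.
      eapply Rle_trans; [apply Hratio; lia |]. simpl.
      replace (C * (q * q ^ k)) with (q * (C * q ^ k)) by ring.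
      apply Rmult_le_compat_l; [lra | exact IH]. }
  assert (HG : is_series (fun k => C * q ^ k) (C / (1 - q))).
  { apply (is_series_scal_l (V := R_NormedModule) C _ _).
    apply is_series_geom. rewrite Rabs_pos_eq; lra. }
  assert (HE : ex_series (fun k => Rabs (b (S K + k)%nat))).
  { apply (ex_series_le (V := R_CompleteNormedModule) _ (fun k => C * q ^ k));
      [| eexists; exact HG].
    intros n. unfold norm; simpl. unfold abs; simpl. rewrite Rabs_Rabsolu. apply Hgeom. }
  eapply Rle_trans; [apply Series_Rabs, HE |].
  rewrite <- (is_series_unique _ _ HG).
  apply Series_le; [intros n; split; [apply Rabs_pos | apply Hgeom] | eexists; exact HG].
Qed.

(** * Integrals dominated by [exp (-t/2)] on [(0, +oo)] *)

Lemma ex_RInt_of_continuous_pos (f : R -> R) p q : (forall t, 0 < t -> continuous f t) ->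
  0 < p -> 0 < q -> ex_RInt f p q.
Proof.
  intros Hf Hp Hq. apply (ex_RInt_continuous (V := R_CompleteNormedModule)).
  intros z Hz. apply Hf. pose proof (Rmin_glb_lt p q 0 Hp Hq). lra.
Qed.

Lemma exp_neg_half_near_0 a a' delta : 0 < a < delta -> 0 < a' < delta ->
  Rabs (exp (- a / 2) - exp (- a' / 2)) <= delta / 2.
Proof.
  intros Ha Ha'.
  pose proof (exp_ineq1_le (- a / 2)). pose proof (exp_ineq1_le (- a' / 2)).
  assert (exp (- a / 2) <= 1) by (rewrite <- exp_0; apply exp_le_compat; lra).
  assert (exp (- a' / 2) <= 1) by (rewrite <- exp_0; apply exp_le_compat; lra).
  apply Rabs_le. lra.
Qed.

Lemma exp_neg_half_near_infty b b' M : 0 < M -> M < b -> M < b' ->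
  Rabs (exp (- b / 2) - exp (- b' / 2)) <= / (1 + M / 2).
Proof.
  intros HM Hb Hb'.
  assert (HMb : forall t, M < t -> 0 < exp (- t / 2) <= / (1 + M / 2)).
  { intros t Ht. split; [apply exp_pos |].
    apply (Rle_trans _ (/ (1 + t / 2))); [apply exp_neg_half_le; lra |].
    apply Rinv_le_contravar; lra. }
  pose proof (HMb b Hb). pose proof (HMb b' Hb'). apply Rabs_le. lra.
Qed.

Lemma at_right_0_lt delta : 0 < delta -> at_right 0 (fun t => 0 < t < delta).
Proof.
  intros Hdelta. exists (mkposreal delta Hdelta). intros t Ht Ht0.
  change (Rabs (t - 0) < delta) in Ht. rewrite Rminus_0_r, Rabs_pos_eq in Ht; lra.
Qed.

Lemma filter_prod_pos :
  filter_prod (at_right 0) (Rbar_locally p_infty) (fun ab => 0 < fst ab /\ 0 < snd ab).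
Proof.
  apply (Filter_prod _ _ _ (fun a => 0 < a < 1) (fun b => 0 < b));
    [apply at_right_0_lt, Rlt_0_1 | exists 0; auto | simpl; intuition lra].
Qed.

Section ExpDominatedIntegral.

Variables (f : R -> R) (C : R).
Hypothesis f_cont : forall t, 0 < t -> continuous f t.
Hypothesis f_dom : forall t, 0 < t -> Rabs (f t) <= C * exp (- t / 2).

Lemma abs_RInt_exp_dominated_le p q : 0 < p <= q ->
  Rabs (RInt f p q) <= 2 * C * (exp (- p / 2) - exp (- q / 2)).
Proof.
  intros Hpq.
  apply (norm_RInt_le (V := R_NormedModule) f (fun t => C * exp (- t / 2)) p q);
    [lra | intros t Ht; apply f_dom; lra
    | apply (RInt_correct (V := R_CompleteNormedModule));
      apply ex_RInt_of_continuous_pos; auto; lra |].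
  replace (2 * C * (exp (- p / 2) - exp (- q / 2)))
    with (minus (- 2 * C * exp (- q / 2)) (- 2 * C * exp (- p / 2)))
    by (unfold minus, plus, opp; simpl; ring).
  apply (is_RInt_derive (V := R_CompleteNormedModule) (fun t => - 2 * C * exp (- t / 2))).
  - intros z _. auto_derive; [auto | unfold Rdiv; field].
  - intros z _. apply (ex_derive_continuous (V := R_NormedModule)). auto_derive. auto.
Qed.

Lemma abs_RInt_exp_dominated p q : 0 < p -> 0 < q ->
  Rabs (RInt f p q) <= 2 * C * Rabs (exp (- p / 2) - exp (- q / 2)).
Proof.
  intros Hp Hq. destruct (Rle_dec p q) as [Hpq | Hpq].
  - assert (exp (- q / 2) <= exp (- p / 2)) by (apply exp_le_compat; lra).
    rewrite (Rabs_pos_eq (_ - _)) by lra. apply abs_RInt_exp_dominated_le; lra.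
  - assert (exp (- p / 2) <= exp (- q / 2)) by (apply exp_le_compat; lra).
    rewrite <- opp_RInt_swap by (apply ex_RInt_of_continuous_pos; auto).
    rewrite Rabs_minus_sym, (Rabs_pos_eq (_ - _)) by lra.
    unfold opp; simpl. rewrite Rabs_Ropp. apply abs_RInt_exp_dominated_le; lra.
Qed.

Lemma exp_dominated_coef_nonneg : 0 <= C.
Proof.
  pose proof (f_dom 1 Rlt_0_1) as H1. pose proof (Rabs_pos (f 1)).
  set (e := exp _) in H1. assert (0 < e) by apply exp_pos. nra.
Qed.

Lemma abs_RInt_sub_exp_dominated a b a' b' : 0 < a -> 0 < b -> 0 < a' -> 0 < b' ->
  Rabs (RInt f a' b' - RInt f a b)
  <= 2 * C * (Rabs (exp (- a / 2) - exp (- a' / 2)) + Rabs (exp (- b' / 2) - exp (- b / 2))).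
Proof.
  intros Ha Hb Ha' Hb'.
  assert (Hex : forall p q, 0 < p -> 0 < q -> ex_RInt f p q)
    by (intros; apply ex_RInt_of_continuous_pos; auto).
  rewrite <- (RInt_Chasles (V := R_CompleteNormedModule) f a a' b),
    <- (RInt_Chasles (V := R_CompleteNormedModule) f a' b' b) by (apply Hex; lra).
  unfold plus; simpl.
  replace (RInt f a' b' - (RInt f a a' + (RInt f a' b' + RInt f b' b)))
    with (- (RInt f a a' + RInt f b' b)) by ring.
  rewrite Rabs_Ropp. eapply Rle_trans; [apply Rabs_triang |].
  pose proof (abs_RInt_exp_dominated a a' Ha Ha').
  pose proof (abs_RInt_exp_dominated b' b Hb' Hb). lra.
Qed.

Lemma ex_RInt_gen_exp_dominated :
  exists l, is_RInt_gen f (at_right 0) (Rbar_locally p_infty) l.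
Proof.
  apply (filterlimi_locally_cauchy (U := R_CompleteNormedModule)
           (F := filter_prod (at_right 0) (Rbar_locally p_infty))).
  - eapply filter_imp; [| exact filter_prod_pos]. intros [a b] [Ha Hb]; simpl in *. split.
    + exists (RInt f a b). apply (RInt_correct (V := R_CompleteNormedModule)).
      apply ex_RInt_of_continuous_pos; auto.
    + intros l1 l2 H1 H2.
      apply (is_RInt_unique (V := R_CompleteNormedModule)) in H1, H2. congruence.
  - intros [eps Heps]. pose proof exp_dominated_coef_nonneg as HC.
    set (K := 2 * C + 1).
    set (delta := eps / (2 * K)). set (M := 4 * K / eps).
    assert (Hdelta : 0 < delta) by (apply Rdiv_lt_0_compat; unfold K; lra).
    assert (HM : 0 < M) by (apply Rdiv_lt_0_compat; unfold K; lra).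
    exists (fun ab => 0 < fst ab < delta /\ M < snd ab). split.
    + apply (Filter_prod _ _ _ (fun a => 0 < a < delta) (fun b => M < b));
        [apply at_right_0_lt, Hdelta | exists M; auto | simpl; auto].
    + intros [a b] [a' b'] [Ha Hb] [Ha' Hb'] l l' Hl Hl'; simpl in *.
      apply (is_RInt_unique (V := R_CompleteNormedModule)) in Hl, Hl'. subst l l'.
      change (Rabs (RInt f a' b' - RInt f a b) < eps).
      eapply Rle_lt_trans; [apply abs_RInt_sub_exp_dominated; lra |].
      pose proof (exp_neg_half_near_0 a a' delta ltac:(lra) ltac:(lra)).
      pose proof (exp_neg_half_near_infty b' b M HM ltac:(lra) ltac:(lra)).
      assert (HK : C / K < / 2).
      { unfold K. apply (Rmult_lt_reg_r (2 * (2 * C + 1))); [lra |].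
        field_simplify; lra. }
      assert (C * delta < eps / 2).
      { replace (C * delta) with (eps / 2 * (C / K)) by (unfold delta; field; unfold K; lra).
        nra. }
      assert (2 * C * / (1 + M / 2) <= eps * (C / K)).
      { replace (eps * (C / K)) with (2 * C * (2 / M))
          by (unfold M; field; unfold K; lra).
        apply Rmult_le_compat_l; [lra |].
        apply (Rle_trans _ (/ (M / 2))); [apply Rinv_le_contravar; lra | right; field; lra]. }
      nra.
Qed.

End ExpDominatedIntegral.

(** * The Gamma function *)

Definition gamma_integrand (x t : R) : R := Rpower t (x - 1) * exp (- t).

Definition is_Gamma (x l : R) : Prop :=
  is_RInt_gen (gamma_integrand x) (at_right 0) (Rbar_locally p_infty) l.

Lemma is_Gamma_unique x l : is_Gamma x l -> Gamma x = l.
Proof. apply (is_RInt_gen_unique (V := R_CompleteNormedModule)). Qed.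

Lemma is_derive_Rpower_mul_exp y t : 0 < t ->
  is_derive (fun t => Rpower t y * exp (- t)) t
    (y * Rpower t (y - 1) * exp (- t) - Rpower t y * exp (- t)).
Proof.
  intros Ht.
  replace (y * Rpower t (y - 1) * exp (- t) - Rpower t y * exp (- t))
    with (plus (mult (y * Rpower t (y - 1)) (exp (- t))) (mult (Rpower t y) (- exp (- t))))
    by (unfold plus, mult; simpl; ring).
  apply (is_derive_mult (fun t => Rpower t y) (fun t => exp (- t))).
  - apply is_derive_Reals. now apply derivable_pt_lim_power.
  - auto_derive; [auto | ring].
  - intros; apply Rmult_comm.
Qed.

Lemma gamma_integrand_continuous x t : 0 < t -> continuous (gamma_integrand x) t.
Proof.
  intros Ht. apply (ex_derive_continuous (V := R_NormedModule)).
  eexists. apply is_derive_Rpower_mul_exp, Ht.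
Qed.

Lemma ex_Gamma x : 1 <= x -> exists l, is_Gamma x l.
Proof.
  intros Hx. apply (ex_RInt_gen_exp_dominated _ (1 + Rpower (2 * x) x)).
  - apply gamma_integrand_continuous.
  - intros t Ht. unfold gamma_integrand.
    rewrite Rabs_pos_eq by (apply Rmult_le_pos; left; apply exp_pos).
    replace x with (x - 1 + 1) at 2 3 by ring.
    apply Rpower_mul_exp_le; lra.
Qed.

Lemma Rpower_mul_exp_lim_0 x : 1 <= x ->
  filterlim (fun t => Rpower t x * exp (- t)) (at_right 0) (locally 0).
Proof.
  intros Hx.
  apply (filterlim_le_le (F := at_right 0) (fun _ => 0) _ (fun t => t) (Finite 0)).
  - eapply filter_imp; [| apply at_right_0_lt, Rlt_0_1]. intros t Ht.
    assert (Rpower t x <= t).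
    { unfold Rpower. rewrite <- (exp_ln t) at 2 by lra. apply exp_le_compat.
      assert (ln t <= 0) by (rewrite <- ln_1; apply ln_le; lra). nra. }
    assert (exp (- t) <= 1) by (rewrite <- exp_0; apply exp_le_compat; lra).
    assert (0 < Rpower t x) by apply exp_pos.
    pose proof (exp_pos (- t)). split; nra.
  - apply filterlim_const.
  - apply (filterlim_filter_le_1 _ (filter_le_within _)), filterlim_id.
Qed.

Lemma Rpower_mul_exp_lim_p_infty x : 0 <= x ->
  filterlim (fun t => Rpower t x * exp (- t)) (Rbar_locally p_infty) (locally 0).
Proof.
  intros Hx. set (C := 1 + Rpower (2 * (x + 1)) (x + 1)).
  apply (filterlim_le_le (fun _ => 0) _ (fun t => C * exp (- t / 2)) (Finite 0)).
  - exists 0. intros t Ht. split.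
    + apply Rmult_le_pos; left; apply exp_pos.
    + apply Rpower_mul_exp_le; lra.
  - apply filterlim_const.
  - replace (Finite 0) with (Rbar_mult C 0) by (simpl; f_equal; ring).
    exact (is_lim_scal_l _ C p_infty 0 is_lim_exp_neg_half).
Qed.

Lemma is_Gamma_succ x l : 1 <= x -> is_Gamma x l -> is_Gamma (x + 1) (x * l).
Proof.
  intros Hx Hl.
  set (h := fun t => Rpower t x * exp (- t)).
  assert (Hderive : forall t, 0 < t ->
    Derive h t = x * gamma_integrand x t - gamma_integrand (x + 1) t).
  { intros t Ht. apply is_derive_unique.
    replace (x * gamma_integrand x t - gamma_integrand (x + 1) t)
      with (x * Rpower t (x - 1) * exp (- t) - Rpower t x * exp (- t))
      by (unfold gamma_integrand; replace (x + 1 - 1) with x by ring; ring).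
    apply is_derive_Rpower_mul_exp, Ht. }
  assert (Hh : is_RInt_gen (Derive h) (at_right 0) (Rbar_locally p_infty) (0 - 0)).
  { apply is_RInt_gen_Derive.
    - eapply filter_imp; [| exact filter_prod_pos]. intros [a b] [Ha Hb] t Ht; simpl in *.
      pose proof (Rmin_glb_lt a b 0 Ha Hb).
      eexists. apply is_derive_Rpower_mul_exp. lra.
    - eapply filter_imp; [| exact filter_prod_pos]. intros [a b] [Ha Hb] t Ht; simpl in *.
      pose proof (Rmin_glb_lt a b 0 Ha Hb).
      apply (continuous_ext_loc _ (fun t => x * gamma_integrand x t - gamma_integrand (x + 1) t)).
      + assert (Ht2 : 0 < t / 2) by lra.
        exists (mkposreal _ Ht2). intros u Hu. change (Rabs (u - t) < t / 2) in Hu.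
        apply Rabs_def2 in Hu. symmetry. apply Hderive. lra.
      + apply (continuous_minus (V := R_NormedModule)).
        * apply (continuous_scal_r (V := R_NormedModule)).
          apply gamma_integrand_continuous. lra.
        * apply gamma_integrand_continuous. lra.
    - apply Rpower_mul_exp_lim_0, Hx.
    - apply Rpower_mul_exp_lim_p_infty. lra. }
  pose proof (is_RInt_gen_minus _ _ _ _ (is_RInt_gen_scal _ x l Hl) Hh) as Hdiff.
  replace (x * l) with (minus (scal x l) (0 - 0))
    by (unfold minus, plus, opp, scal; simpl; unfold mult; simpl; ring).
  eapply is_RInt_gen_ext; [| exact Hdiff].
  eapply filter_imp; [| exact filter_prod_pos]. intros [a b] [Ha Hb] t Ht; simpl in *.
  pose proof (Rmin_glb_lt a b 0 Ha Hb).
  rewrite Hderive by lra. unfold minus, plus, opp, scal; simpl; unfold mult; simpl. ring.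
Qed.

Lemma is_Gamma_pos x l : 1 <= x -> is_Gamma x l -> 0 < l.
Proof.
  intros Hx Hl.
  set (I := RInt (gamma_integrand x) 1 2).
  assert (HI : 0 < I).
  { apply RInt_gt_0; [lra | |].
    - intros t Ht. apply Rmult_lt_0_compat; apply exp_pos.
    - intros t Ht. apply gamma_integrand_continuous. lra. }
  assert (Hfar : filter_prod (at_right 0) (Rbar_locally p_infty)
                   (fun ab => 0 < fst ab < 1 /\ 2 < snd ab)).
  { apply (Filter_prod _ _ _ (fun a => 0 < a < 1) (fun b => 2 < b));
      [apply at_right_0_lt, Rlt_0_1 | exists 2; auto | simpl; auto]. }
  assert (Hnear := Hl (ball l (mkposreal I HI)) (locally_ball l (mkposreal I HI))).
  destruct (filter_ex _ (filter_and _ _ Hfar Hnear)) as [[a b] [[Ha Hb] [y [Hy Hball]]]].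
  simpl in *. apply (is_RInt_unique (V := R_CompleteNormedModule)) in Hy. subst y.
  change (Rabs (RInt (gamma_integrand x) a b - l) < I) in Hball.
  assert (Hex : forall p q, 0 < p -> 0 < q -> ex_RInt (gamma_integrand x) p q)
    by (intros; apply ex_RInt_of_continuous_pos; auto using gamma_integrand_continuous).
  assert (Hge : forall p q, 0 < p <= q -> 0 <= RInt (gamma_integrand x) p q).
  { intros p q Hpq. apply RInt_ge_0; [lra | apply Hex; lra |].
    intros t Ht. apply Rmult_le_pos; left; apply exp_pos. }
  rewrite <- (RInt_Chasles (V := R_CompleteNormedModule) _ a 1 b),
    <- (RInt_Chasles (V := R_CompleteNormedModule) _ 1 2 b) in Hball by (apply Hex; lra).
  unfold plus in Hball; simpl in Hball. fold I in Hball.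
  pose proof (Hge a 1 ltac:(lra)). pose proof (Hge 2 b ltac:(lra)).
  apply Rabs_def2 in Hball. lra.
Qed.

Lemma Gamma_pos x : 1 <= x -> 0 < Gamma x.
Proof.
  intros Hx. destruct (ex_Gamma x Hx) as [l Hl].
  rewrite (is_Gamma_unique _ _ Hl). exact (is_Gamma_pos x l Hx Hl).
Qed.

Fixpoint pochhammer (a : R) (m : nat) : R :=
  match m with
  | O => 1
  | S k => pochhammer a k * (a + INR k)
  end.

Lemma pochhammer_pos a m : 0 < a -> 0 < pochhammer a m.
Proof.
  intros Ha. induction m as [| m IH]; simpl; [lra |].
  pose proof (pos_INR m). nra.
Qed.

Lemma pochhammer_S_l a m : pochhammer a (S m) = a * pochhammer (a + 1) m.
Proof.
  induction m as [| m IH]; [simpl; ring |].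
  change (pochhammer a (S (S m))) with (pochhammer a (S m) * (a + INR (S m))).
  rewrite IH, S_INR. simpl. ring.
Qed.

Lemma Gamma_add_nat x m : 1 <= x -> Gamma (INR m + x) = pochhammer x m * Gamma x.
Proof.
  intros Hx. destruct (ex_Gamma x Hx) as [l Hl]. rewrite (is_Gamma_unique _ _ Hl).
  apply is_Gamma_unique. induction m as [| m IH].
  - simpl. rewrite Rplus_0_l, Rmult_1_l. exact Hl.
  - rewrite S_INR. replace (INR m + 1 + x) with (INR m + x + 1) by ring.
    replace (pochhammer x (S m) * l) with ((INR m + x) * (pochhammer x m * l)) by (simpl; ring).
    apply is_Gamma_succ; [pose proof (pos_INR m); lra | exact IH].
Qed.

(** * The normalized Bessel series *)

Definition bessel_coef (nu : R) (m : nat) : R :=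
  (-1) ^ m / (INR (fact m) * pochhammer (nu + 1) m * 4 ^ m).

Definition bessel_series (nu u : R) : R := PSeries (bessel_coef nu) u.

(* In the variable [s = sqrt u] this is [rho(s)^2 + rho'(s)^2]. *)
Definition bessel_energy (nu u : R) : R :=
  bessel_series nu u ^ 2 + 4 * u * PSeries (PS_derive (bessel_coef nu)) u ^ 2.

Section BesselSeries.

Variable nu : R.
Hypothesis nu_gt : -1 < nu.

Lemma bessel_coef_factors_pos m :
  0 < INR (fact m) /\ 0 < pochhammer (nu + 1) m /\ 0 < 4 ^ m.
Proof.
  split; [apply INR_fact_lt_0 | split; [apply pochhammer_pos; lra | apply pow_lt; lra]].
Qed.

Lemma abs_bessel_coef m :
  Rabs (bessel_coef nu m) = / (INR (fact m) * pochhammer (nu + 1) m * 4 ^ m).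
Proof.
  unfold bessel_coef, Rdiv. destruct (bessel_coef_factors_pos m) as [H1 [H2 H3]].
  rewrite Rabs_mult, pow_1_abs, Rmult_1_l, Rabs_pos_eq; [reflexivity |].
  left. apply Rinv_0_lt_compat, Rmult_lt_0_compat; [apply Rmult_lt_0_compat |]; lra.
Qed.

Lemma bessel_coef_0 : bessel_coef nu 0 = 1.
Proof. unfold bessel_coef; simpl. field. Qed.

Lemma bessel_coef_succ m :
  bessel_coef nu (S m) = - bessel_coef nu m / (4 * (INR m + 1) * (nu + 1 + INR m)).
Proof.
  unfold bessel_coef. destruct (bessel_coef_factors_pos m) as [H1 [H2 H3]].
  pose proof (pos_INR m).
  simpl pochhammer. rewrite fact_simpl, mult_INR, S_INR. simpl pow.
  field. repeat split; lra.
Qed.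

Lemma bessel_coef_neq0 m : bessel_coef nu m <> 0.
Proof.
  unfold bessel_coef. destruct (bessel_coef_factors_pos m) as [H1 [H2 H3]].
  apply Rmult_integral_contrapositive_currified; [apply pow_nonzero; lra |].
  apply Rinv_neq_0_compat. apply Rgt_not_eq, Rmult_lt_0_compat; [apply Rmult_lt_0_compat |]; lra.
Qed.

Lemma CV_radius_bessel_coef : CV_radius (bessel_coef nu) = p_infty.
Proof.
  apply CV_radius_infinite_DAlembert; [exact bessel_coef_neq0 |].
  apply (is_lim_seq_le_le_loc (fun _ => 0) _ (fun n => / INR n)).
  - exists 1%nat. intros n Hn.
    assert (HnR : 1 <= INR n) by (apply (le_INR 1 n); lia).
    rewrite bessel_coef_succ.
    replace (- bessel_coef nu n / (4 * (INR n + 1) * (nu + 1 + INR n)) / bessel_coef nu n)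
      with (- / (4 * (INR n + 1) * (nu + 1 + INR n)))
      by (field; repeat split; try apply bessel_coef_neq0; nra).
    rewrite Rabs_Ropp, Rabs_pos_eq by (left; apply Rinv_0_lt_compat; nra).
    split; [left; apply Rinv_0_lt_compat; nra |].
    apply Rinv_le_contravar; [lra | nra].
  - apply is_lim_seq_const.
  - replace (Finite 0) with (Rbar_inv p_infty) by reflexivity.
    apply is_lim_seq_inv; [apply is_lim_seq_INR | discriminate].
Qed.

Lemma ex_pseries_bessel_coef u : ex_pseries (bessel_coef nu) u.
Proof. apply CV_radius_inside. rewrite CV_radius_bessel_coef. exact I. Qed.

Lemma ex_pseries_bessel_coef_derive u : ex_pseries (PS_derive (bessel_coef nu)) u.
Proof.
  apply CV_radius_inside. rewrite CV_radius_derive, CV_radius_bessel_coef. exact I.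
Qed.

Lemma ex_pseries_bessel_coef_derive2 u :
  ex_pseries (PS_derive (PS_derive (bessel_coef nu))) u.
Proof.
  apply CV_radius_inside. rewrite !CV_radius_derive, CV_radius_bessel_coef. exact I.
Qed.

Lemma bessel_series_ode u :
  4 * u * PSeries (PS_derive (PS_derive (bessel_coef nu))) u
  + 4 * (nu + 1) * PSeries (PS_derive (bessel_coef nu)) u + bessel_series nu u = 0.
Proof.
  unfold bessel_series. set (a := bessel_coef nu).
  rewrite Rmult_assoc, <- PSeries_incr_1, <- !PSeries_scal.
  assert (E1 : ex_pseries (PS_scal 4 (PS_incr_1 (PS_derive (PS_derive a)))) u).
  { apply ex_pseries_scal; [intros; apply Rmult_comm |].
    apply ex_pseries_incr_1, ex_pseries_bessel_coef_derive2. }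
  assert (E2 : ex_pseries (PS_scal (4 * (nu + 1)) (PS_derive a)) u).
  { apply ex_pseries_scal; [intros; apply Rmult_comm |].
    apply ex_pseries_bessel_coef_derive. }
  rewrite <- PSeries_plus by auto.
  rewrite <- PSeries_plus by (auto using ex_pseries_plus, ex_pseries_bessel_coef).
  rewrite <- (PSeries_const_0 u). apply PSeries_ext. intros n.
  unfold PS_plus, PS_scal, PS_derive, PS_incr_1, a.
  destruct n as [| k].
  - rewrite bessel_coef_succ, bessel_coef_0.
    unfold plus, scal, zero; simpl. unfold mult; simpl. field. lra.
  - rewrite (bessel_coef_succ (S k)), !S_INR.
    unfold plus, scal, zero; simpl. unfold mult; simpl.
    pose proof (pos_INR k). field. nra.
Qed.

Lemma is_derive_bessel_energy u :
  is_derive (bessel_energy nu) u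
    (- (8 * nu + 4) * PSeries (PS_derive (bessel_coef nu)) u ^ 2).
Proof.
  unfold bessel_energy, bessel_series. auto_derive.
  - split; [| split; [| auto]]; eexists; apply is_derive_PSeries;
      [rewrite CV_radius_bessel_coef | rewrite CV_radius_derive, CV_radius_bessel_coef];
      exact I.
  - rewrite !Derive_PSeries by
      (try rewrite CV_radius_derive; rewrite CV_radius_bessel_coef; exact I).
    pose proof (bessel_series_ode u). unfold bessel_series in *. nra.
Qed.

Lemma bessel_energy_le_of_le u0 u : -1/2 <= nu -> u0 <= u ->
  bessel_energy nu u <= bessel_energy nu u0.
Proof.
  intros Hnu Hu.
  destruct (MVT_gen (bessel_energy nu) u0 u
              (fun t => - (8 * nu + 4) * PSeries (PS_derive (bessel_coef nu)) t ^ 2))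
    as [c [_ Hc]].
  - intros; apply is_derive_bessel_energy.
  - intros t _. apply continuity_pt_filterlim.
    apply (ex_derive_continuous (V := R_NormedModule)).
    eexists; apply is_derive_bessel_energy.
  - assert (0 <= (8 * nu + 4) * PSeries (PS_derive (bessel_coef nu)) c ^ 2 * (u - u0))
      by (apply Rmult_le_pos; [apply Rmult_le_pos; [| apply pow2_ge_0] |]; lra).
    lra.
Qed.

Lemma abs_bessel_series_le u0 u c : -1/2 <= nu -> 0 <= u0 <= u -> 0 <= c ->
  bessel_energy nu u0 <= c ^ 2 -> Rabs (bessel_series nu u) <= c.
Proof.
  intros Hnu Hu Hc Henergy.
  pose proof (bessel_energy_le_of_le u0 u Hnu (proj2 Hu)).
  assert (bessel_series nu u ^ 2 <= bessel_energy nu u).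
  { unfold bessel_energy.
    assert (0 <= 4 * u * PSeries (PS_derive (bessel_coef nu)) u ^ 2)
      by (apply Rmult_le_pos; [lra | apply pow2_ge_0]).
    lra. }
  rewrite <- (Rabs_pos_eq c) by exact Hc. apply Rsqr_le_abs_0.
  unfold Rsqr. nra.
Qed.

End BesselSeries.

Lemma BesselJ_normalized_eq nu s : 0 <= nu -> 0 < s ->
  Rpower (2 / s) nu * Gamma (nu + 1) * BesselJ nu s = bessel_series nu (s ^ 2).
Proof.
  intros Hnu Hs. set (G := Gamma (nu + 1)).
  assert (HG : 0 < G) by (apply Gamma_pos; lra).
  unfold BesselJ, bessel_series, PSeries.
  rewrite (Series_ext _ (fun m => Rpower (s / 2) nu / G * (bessel_coef nu m * (s ^ 2) ^ m))).
  - assert (Hinv : Rpower (2 / s) nu * Rpower (s / 2) nu = 1).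
    { rewrite Rpower_mult_distr by (apply Rdiv_lt_0_compat; lra).
      replace (2 / s * (s / 2)) with 1 by (field; lra).
      unfold Rpower. rewrite ln_1, Rmult_0_r. apply exp_0. }
    rewrite Series_scal_l.
    transitivity ((Rpower (2 / s) nu * Rpower (s / 2) nu)
                  * Series (fun m => bessel_coef nu m * (s ^ 2) ^ m)); [field; lra |].
    rewrite Hinv, Rmult_1_l. reflexivity.
  - intros m. replace (INR m + nu + 1) with (INR m + (nu + 1)) by ring.
    rewrite Gamma_add_nat by lra. fold G.
    rewrite Rpower_plus, Rpower_half_twice by exact Hs.
    unfold bessel_coef. destruct (bessel_coef_factors_pos nu ltac:(lra) m) as [H1 [H2 H3]].
    field. repeat split; lra.
Qed.

Lemma rho_eq_bessel_series d s : 0 < s -> rho d s = bessel_series (INR d / 2) (s ^ 2).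
Proof.
  intros Hs. apply BesselJ_normalized_eq; [| exact Hs].
  pose proof (pos_INR d). lra.
Qed.

Lemma PS_derive_bessel_coef nu n : -1 < nu ->
  PS_derive (bessel_coef nu) n = - / (4 * (nu + 1)) * bessel_coef (nu + 1) n.
Proof.
  intros Hnu. unfold PS_derive, bessel_coef.
  destruct (bessel_coef_factors_pos (nu + 1) ltac:(lra) n) as [H1 [H2 H3]].
  rewrite pochhammer_S_l, fact_simpl, mult_INR, S_INR. simpl pow.
  pose proof (pos_INR n). field. repeat split; lra.
Qed.

Lemma bessel_series_derive nu u : -1 < nu ->
  PSeries (PS_derive (bessel_coef nu)) u = - / (4 * (nu + 1)) * bessel_series (nu + 1) u.
Proof.
  intros Hnu. unfold bessel_series. rewrite <- PSeries_scal.
  apply PSeries_ext. intros n. apply PS_derive_bessel_coef, Hnu.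
Qed.

Lemma bessel_energy_eq nu u : -1 < nu ->
  bessel_energy nu u
  = bessel_series nu u ^ 2 + u / (4 * (nu + 1) ^ 2) * bessel_series (nu + 1) u ^ 2.
Proof.
  intros Hnu. unfold bessel_energy. rewrite bessel_series_derive by exact Hnu.
  field. lra.
Qed.

(** * Numerical bounds *)

(* Past the third term the series is dominated by a geometric one of ratio [1/64];
   hence [378 = 384 (1 - 1/64)]. *)
Lemma bessel_series_approx nu u : 0 <= nu -> 0 <= u <= 1 ->
  Rabs (bessel_series nu u - (1 - u / (4 * (nu + 1)) + u ^ 2 / (32 * (nu + 1) * (nu + 2))))
    <= u ^ 3 / (378 * (nu + 1) * (nu + 2) * (nu + 3)).
Proof.
  intros Hnu Hu.
  assert (Hnu1 : -1 < nu) by lra.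
  set (b := fun k => bessel_coef nu k * u ^ k).
  assert (Hsum : sum_f_R0 b 2
                 = 1 - u / (4 * (nu + 1)) + u ^ 2 / (32 * (nu + 1) * (nu + 2))).
  { unfold b. simpl sum_f_R0.
    rewrite !bessel_coef_succ, bessel_coef_0 by exact Hnu1. simpl. field. lra. }
  assert (Hb3 : Rabs (b 3%nat) = u ^ 3 / (384 * (nu + 1) * (nu + 2) * (nu + 3))).
  { unfold b. rewrite Rabs_mult, abs_bessel_coef, Rabs_pos_eq by (auto; apply pow_le; lra).
    simpl. field. lra. }
  rewrite <- Hsum.
  replace (u ^ 3 / (378 * (nu + 1) * (nu + 2) * (nu + 3))) with (Rabs (b 3%nat) / (1 - / 64))
    by (rewrite Hb3; field; lra).
  apply Series_sub_sum_le; [lra | |].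
  { eapply ex_series_ext; [| apply (ex_pseries_bessel_coef nu Hnu1 u)].
    intros n. unfold b, scal; simpl. unfold mult; simpl. rewrite pow_n_pow. ring. }
  intros n Hn. unfold b. rewrite bessel_coef_succ by exact Hnu1.
  assert (HnR : 3 <= INR n) by (replace 3 with (INR 3) by (simpl; ring); apply le_INR; lia).
  set (D := 4 * (INR n + 1) * (nu + 1 + INR n)).
  assert (HD : 64 <= D) by (unfold D; nra).
  replace (- bessel_coef nu n / D * u ^ S n) with (bessel_coef nu n * u ^ n * (- (u / D)))
    by (simpl; field; lra).
  rewrite Rabs_mult, Rabs_Ropp, (Rabs_pos_eq (u / D)) by (apply Rdiv_le_0_compat; lra).
  rewrite Rmult_comm. apply Rmult_le_compat_r; [apply Rabs_pos |].
  apply (Rmult_le_reg_l D); [lra |]. field_simplify; lra.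
Qed.

Lemma bessel_energy_1_at_4_5_le : bessel_energy 1 (4 / 5) <= 0.93 ^ 2.
Proof.
  rewrite bessel_energy_eq by lra. replace (1 + 1) with 2 by ring.
  pose proof (bessel_series_approx 1 (4 / 5) ltac:(lra) ltac:(lra)) as H1.
  pose proof (bessel_series_approx 2 (4 / 5) ltac:(lra) ltac:(lra)) as H2.
  apply sqr_le_of_abs_sub_le in H1, H2; lra.
Qed.

Lemma bessel_energy_3_2_at_1_le : bessel_energy (3 / 2) 1 <= 0.93 ^ 2.
Proof.
  rewrite bessel_energy_eq by lra. replace (3 / 2 + 1) with (5 / 2) by field.
  pose proof (bessel_series_approx (3 / 2) 1 ltac:(lra) ltac:(lra)) as H1.
  pose proof (bessel_series_approx (5 / 2) 1 ltac:(lra) ltac:(lra)) as H2.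
  apply sqr_le_of_abs_sub_le in H1, H2; lra.
Qed.

Theorem lemma4 :
  forall (d : nat) (kappa : R),
    (d = 2%nat \/ d = 3%nat) -> 0 < kappa ->
    forall x x' : nat -> R,
      (2 * kappa) * eucl_dist d x x' / sqrt (INR d + 2) >= 1 / sqrt 5 ->
      Rabs (Kern d kappa x x') <= 1 - 0.07.
Proof.
  intros d kappa Hd Hkappa x x' Hfar.
  unfold Kern. set (s := 2 * kappa * eucl_dist d x x') in *.
  assert (HD : 0 < INR d + 2) by (pose proof (pos_INR d); lra).
  destruct (sqr_ge_of_div_sqrt_ge s _ HD Hfar) as [Hs Hs2].
  rewrite rho_eq_bessel_series by exact Hs.
  enough (Rabs (bessel_series (INR d / 2) (s ^ 2)) <= 0.93) by lra.
  destruct Hd as [-> | ->]; simpl INR in *.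
  - replace ((1 + 1) / 2) with 1 by field.
    apply (abs_bessel_series_le 1 ltac:(lra) (4 / 5)); [lra | lra | lra |].
    exact bessel_energy_1_at_4_5_le.
  - replace ((1 + 1 + 1) / 2) with (3 / 2) by field.
    apply (abs_bessel_series_le (3 / 2) ltac:(lra) 1); [lra | lra | lra |].
    exact bessel_energy_3_2_at_1_le.
Qed.
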